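(* Let $\mathbb{S}\subseteq\mathbb{R}$ be an interval, let $Q:\mathbb{S}\to\mathbb{R}$ be continuous and twice differentiable, and let $q(z)=Q'(z)$. For $\mathbf{z}\in\mathbb{S}^K$ set $p_k(\mathbf{z})=e^{Q(z_k)}/\sum_{j=1}^K e^{Q(z_j)}$, $k=1,\dots,K$, and for $\hat{\mathbf{s}},\mathbf{s}\in\mathbb{S}^K$ define $$\mathcal{L}_m(\hat{\mathbf{s}},\mathbf{s})=\log\Big\{\sum_{k=1}^K e^{Q(\hat s_k)}\Big\}-\log\Big\{\sum_{k=1}^K e^{Q(s_k)}\Big\}-\sum_{k=1}^K(\hat s_k-s_k)\,q(s_k)\,p_k(\mathbf{s}).$$ If $Q$ is convex on $\mathbb{S}$ (equivalently, $q$ is monotonically non-decreasing on $\mathbb{S}$), then for every $\mathbf{s}\in\mathbb{S}^K$ the map $\hat{\mathbf{s}}\mapsto\mathcal{L}_m(\hat{\mathbf{s}},\mathbf{s})$ is convex on $\mathbb{S}^K$; it is the multi-class matching loss (Bregman divergence) of the primitive $H(\mathbf{z})=\log\sum_k e^{Q(z_k)}$, whose gradient components are $q(z_k)p_k(\mathbf{z})$.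
   Context: $p_k$ is the composite Softmax and $q$ the scaling function. The multi-class matching loss with primitive $H$ is $H(\hat{\mathbf{s}})-H(\mathbf{s})-(\hat{\mathbf{s}}-\mathbf{s})\cdot\nabla H(\mathbf{s})$. *)

From HB Require Import structures.
From mathcomp Require Import all_boot all_order all_algebra.
From mathcomp Require Import all_classical all_reals all_analysis.
Set Implicit Arguments. Unset Strict Implicit. Unset Printing Implicit Defensive.
Import Order.TTheory GRing.Theory Num.Theory numFieldNormedType.Exports.
Local Open Scope ring_scope.
Local Open Scope classical_set_scope.

Section Defs.
Variable R : realType.

Definition convex_on (S : set R) (f : R -> R) : Prop :=
  forall x y t, S x -> S y -> 0 <= t -> t <= 1 ->
    f (t * x + (1 - t) * y) <= t * f x + (1 - t) * f y.

Definition convex_on_vec (K : nat) (S : set R) (F : ('I_K -> R) -> R) : Prop :=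
  forall (x y : 'I_K -> R) t, (forall k, S (x k)) -> (forall k, S (y k)) ->
    0 <= t -> t <= 1 ->
    F (fun k => t * x k + (1 - t) * y k) <= t * F x + (1 - t) * F y.

Definition softmaxQ (Q : R -> R) (K : nat) (z : 'I_K -> R) (k : 'I_K) : R :=
  expR (Q (z k)) / \sum_(j < K) expR (Q (z j)).

Definition primH (Q : R -> R) (K : nat) (z : 'I_K -> R) : R :=
  ln (\sum_(k < K) expR (Q (z k))).

Definition matchLoss (Q : R -> R) (K : nat) (shat s : 'I_K -> R) : R :=
  primH Q shat - primH Q s
  - \sum_(k < K) (shat k - s k) * (derive1 Q (s k)) * softmaxQ Q s k.

Definition upd (K : nat) (z : 'I_K -> R) (k : 'I_K) (t : R) : 'I_K -> R :=
  fun j => if j == k then t else z j.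

End Defs.

(* Log-sum-exp is convex and nondecreasing in each argument, so composing it
   coordinatewise with the convex Q gives the convex primitive H; the matching
   loss differs from H by an affine function of shat, hence is convex. For the gradient,
   freezing all coordinates but the k-th turns H into
   t |-> ln (expR (Q t) + C), differentiated by the chain rule. *)

From HB Require Import structures.
From mathcomp Require Import all_boot all_order all_algebra.
From mathcomp Require Import all_classical all_reals all_analysis.
From mathcomp Require Import ring lra.
Set Implicit Arguments. Unset Strict Implicit. Unset Printing Implicit Defensive.
Import Order.TTheory GRing.Theory Num.Theory numFieldNormedType.Exports.
Local Open Scope ring_scope.
Local Open Scope classical_set_scope.

Section LogSumExp.
Variables (R : realType) (I : finType).
Implicit Types (a b : I -> R) (t : R).

Lemma expR_convex (x y t : R) : 0 <= t -> t <= 1 ->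
  expR (t * x + (1 - t) * y) <= t * expR x + (1 - t) * expR y.
Proof. by move=> t0 t1; exact: (convex_expR (Itv01 t0 t1) x y). Qed.

Lemma sumr_expR_gt0 (i0 : I) a : 0 < \sum_i expR (a i).
Proof. by rewrite (bigD1 i0) //= ltr_pwDl ?expR_gt0 // sumr_ge0. Qed.

Lemma ler_logsumexp (i0 : I) a b : (forall i, a i <= b i) ->
  ln (\sum_i expR (a i)) <= ln (\sum_i expR (b i)).
Proof.
move=> le_ab; rewrite ler_ln ?posrE ?(sumr_expR_gt0 i0) //.
by apply: ler_sum => i _; rewrite ler_expR.
Qed.

Lemma logsumexp_convex (i0 : I) a b t : 0 <= t -> t <= 1 ->
  ln (\sum_i expR (t * a i + (1 - t) * b i))
    <= t * ln (\sum_i expR (a i)) + (1 - t) * ln (\sum_i expR (b i)).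
Proof.
move=> t0 t1; set A := \sum_i expR (a i); set B := \sum_i expR (b i).
have A_gt0 : 0 < A by exact: sumr_expR_gt0.
have B_gt0 : 0 < B by exact: sumr_expR_gt0.
set c := t * ln A + (1 - t) * ln B.
rewrite -[leRHS]expRK ler_ln ?posrE ?expR_gt0 ?(sumr_expR_gt0 i0) //.
(* Normalising by A and B turns both sums into probability vectors. *)
have term_le i : expR (t * a i + (1 - t) * b i)
    <= expR c * (t * (expR (a i) / A) + (1 - t) * (expR (b i) / B)).
  have -> : t * a i + (1 - t) * b i
      = c + (t * (a i - ln A) + (1 - t) * (b i - ln B)) by rewrite /c; ring.
  rewrite expRD ler_wpM2l ?expR_ge0 //.
  by have := expR_convex (a i - ln A) (b i - ln B) t0 t1; rewrite !expRB !lnK.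
apply: (le_trans (ler_sum _ (fun i _ => term_le i))).
rewrite -mulr_sumr big_split /= -!mulr_sumr -!mulr_suml -/A -/B.
by rewrite !divff ?gt_eqF //; lra.
Qed.

End LogSumExp.

Section MatchingLoss.
Variables (R : realType) (S : set R) (Q : R -> R) (K : nat).

Lemma primH_convex : (0 < K)%N -> convex_on S Q -> convex_on_vec S (@primH R Q K).
Proof.
move=> K_gt0 cvxQ x y t Sx Sy t0 t1; rewrite /primH.
apply: le_trans _ (logsumexp_convex (Ordinal K_gt0) (Q \o x) (Q \o y) t0 t1).
by apply: (ler_logsumexp (Ordinal K_gt0)) => k; exact: cvxQ.
Qed.

Lemma convex_on_vec_bregman (F : ('I_K -> R) -> R) (s g : 'I_K -> R) :
  convex_on_vec S F ->
  convex_on_vec S (fun x => F x - F s - \sum_k (x k - s k) * g k).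
Proof.
move=> cvxF x y t Sx Sy t0 t1; have := cvxF x y t Sx Sy t0 t1.
have -> : \sum_k (t * x k + (1 - t) * y k - s k) * g k
    = t * \sum_k (x k - s k) * g k + (1 - t) * \sum_k (y k - s k) * g k.
  by rewrite !mulr_sumr -big_split; apply: eq_bigr => k _ /=; ring.
lra.
Qed.

Lemma matchLoss_convex (s : 'I_K -> R) :
  convex_on_vec S (@primH R Q K) -> convex_on_vec S (fun shat => matchLoss Q shat s).
Proof.
have -> : (fun shat => matchLoss Q shat s) = fun shat =>
    primH Q shat - primH Q s - \sum_k (shat k - s k) * (derive1 Q (s k) * softmaxQ Q s k).
  apply: funext => shat; rewrite /matchLoss; congr (_ - _).
  by apply: eq_bigr => k _; rewrite -mulrA.
exact: convex_on_vec_bregman.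
Qed.

Lemma is_derive_primH_upd (z : 'I_K -> R) (k : 'I_K) : derivable Q (z k) 1 ->
  is_derive (z k) 1 (fun t => primH Q (upd z k t)) (derive1 Q (z k) * softmaxQ Q z k).
Proof.
move=> dQ; set C := \sum_(j < K | j != k) expR (Q (z j)).
have primH_updE : (fun t => primH Q (upd z k t)) = @ln R \o (expR \o Q + cst C).
  apply: funext => t; rewrite /primH /= (bigD1 k) //= /upd eqxx.
  by congr (ln (_ + _)); apply: eq_bigr => j /negbTE ->.
have sumE : expR (Q (z k)) + C = \sum_(j < K) expR (Q (z j)).
  by rewrite [RHS](bigD1 k).
have sum_gt0 : 0 < expR (Q (z k)) + C by rewrite sumE (sumr_expR_gt0 k).
rewrite primH_updE; apply: is_derive_eq.
  apply: is_derive1_comp; first exact: is_derive1_ln.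
  by apply: is_deriveD; apply: is_derive1_comp; exact: derivableP.
by rewrite -derive1E /softmaxQ -sumE addr0 /=; ring.
Qed.

End MatchingLoss.

Theorem theorem4 (R : realType) (I : interval R) (Q : R -> R) (K : nat)
  (hK : (0 < K)%N)
  (hcont : {within [set x : R | x \in I], continuous Q})
  (hdiff : forall x, interior [set y : R | y \in I] x ->
             derivable Q x 1 /\ derivable (derive1 Q) x 1)
  (hconv : convex_on [set x : R | x \in I] Q) :
  (forall s : 'I_K -> R, (forall k, s k \in I) ->
     convex_on_vec [set x : R | x \in I] (fun shat => matchLoss Q shat s))
  /\
  (forall (z : 'I_K -> R) (k : 'I_K), (forall j, z j \in I) ->
     derivable Q (z k) 1 ->
     derivable (fun t => primH Q (upd z k t)) (z k) 1 /\
     derive1 (fun t => primH Q (upd z k t)) (z k)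
       = derive1 Q (z k) * softmaxQ Q z k).
Proof.
split=> [s _ | z k _ dQ].
  exact/matchLoss_convex/primH_convex.
have dH := is_derive_primH_upd dQ.
split; first exact: ex_derive.
by rewrite derive1E derive_val.
Qed.
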